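(* Let $B_1,\dots,B_N$ be the biconnected components of $G$. Then Condition 1 holds if and only if for each $n=1,\dots,N$ there exists an individual $v_n\in V$ who evaluates all alternatives of $B_n$, i.e. $A(B_n)\subseteq A_{v_n}$ (equivalently, $B_n\subseteq G_{v_n}$).
   Context: Let $A$ be a finite set of alternatives and $V$ a finite set of individuals, with $|A|\ge 3$ and $|V|\ge 3$. For each $v\in V$, let $A_v\subseteq A$ be the set of alternatives that $v$ evaluates, with $|A_v|\ge 2$. A graph is identified with its edge set, a set of unordered pairs $ab=\{a,b\}$ of distinct alternatives; a subgraph is a subset of the edge set. For a subgraph $H$, $A(H)$ denotes the set of alternatives appearing in some edge of $H$. Define $G_v=\{ab : a,b\in A_v,\ a\neq b\}$ and $G=\{ab: a,b\in A_v \text{ for some } v\in V,\ a\ne b\}$. A path in $G$ is a set $\{a_1a_2,a_2a_3,\dots,a_{M-1}a_M\}\subseteq G$ with $a_1,\dots,a_M$ distinct; a cycle in $G$ is a set $\{a_1a_2,\dots,a_{M-1}a_M,a_Ma_1\}\subseteq G$ with $a_1,\dots,a_M$ distinct and $M\ge 3$. A nonempty subgraph $H$ is connected if any two vertices of $A(H)$ are joined by a path in $H$. A vertex $a\in A(H)$ is an articulation vertex of $H$ if there are distinct $b,c\in A(H)\setminus\{a\}$ such that every path in $H$ from $b$ to $c$ contains $a$. A subgraph $B\subseteq G$ is biconnected if it consists of a single edge or is connected and has no articulation vertex; a biconnected component of $G$ is a nonempty maximal (under inclusion) biconnected subgraph of $G$ (isolated vertices are not components). Condition 1: for every cycle $C$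 of $G$ there exists $v\in V$ such that $A(C)\subseteq A_v$. *)

From mathcomp Require Import all_boot.
Set Implicit Arguments. Unset Strict Implicit. Unset Printing Implicit Defensive.

Section Graphs.
Variable A : finType.

(* An edge ab = {a,b} is a two-element subset of A; a graph is a set of edges. *)
Definition is_edge (e : {set A}) : bool := #|e| == 2.

Definition verts (H : {set {set A}}) : {set A} := \bigcup_(e in H) e.

Definition adj (H : {set {set A}}) : rel A := fun x y => [set x; y] \in H.

(* b :: s is a path in H from b to c: distinct vertices, consecutive
   vertices joined by an edge of H, ending at c. Its vertex set is b :: s. *)
Definition path_in (H : {set {set A}}) (b c : A) (s : seq A) : bool :=
  [&& path (adj H) b s, uniq (b :: s) & last b s == c].

(* s = [:: a_1; ...; a_M] is a cycle of H: M >= 3, distinct vertices,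
   a_i a_(i+1) in H and a_M a_1 in H. Its vertex set A(C) is [set x in s]. *)
Definition cycle_in (H : {set {set A}}) (s : seq A) : bool :=
  [&& 2 < size s, uniq s & cycle (adj H) s].

Definition connected (H : {set {set A}}) : Prop :=
  H != set0 /\
  forall b c, b \in verts H -> c \in verts H -> exists s, path_in H b c s.

Definition articulation (H : {set {set A}}) (a : A) : Prop :=
  a \in verts H /\
  exists b c, [/\ b \in verts H :\ a, c \in verts H :\ a, b != c &
    forall s, path_in H b c s -> a \in b :: s].

Definition biconnected (B : {set {set A}}) : Prop :=
  #|B| = 1 \/ (connected B /\ forall a, ~ articulation B a).

Definition bicomponent (G B : {set {set A}}) : Prop :=
  [/\ B != set0, B \subset G, biconnected B &
    forall B' : {set {set A}}, B \subset B' -> B' \subset G -> biconnected B' -> B' = B].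

End Graphs.

Section Model.
Variables (A V : finType) (Av : V -> {set A}).

Definition Gv (v : V) : {set {set A}} :=
  [set e : {set A} | is_edge e && (e \subset Av v)].

Definition Gall : {set {set A}} := \bigcup_(v : V) Gv v.

Definition condition1 : Prop :=
  forall s : seq A, cycle_in Gall s -> exists v : V, [set x in s] \subset Av v.

End Model.

From mathcomp Require Import all_boot.
From Stdlib Require Import Classical.

Set Implicit Arguments. Unset Strict Implicit. Unset Printing Implicit Defensive.

(* If every cycle of G is evaluated by one individual, then in a biconnected
   component B any path x - z - w can be closed up: a path from x to w avoiding
   z exists since z is not an articulation vertex, giving a cycle whose
   evaluator sees the pair {x, w}; so xw is an edge of G, and by maximality of B
   an edge of B.  Hence B is a clique, its vertices form a single cycle, and the
   evaluator of that cycle evaluates all of A(B).  Conversely a cycle is a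
   biconnected subgraph, hence lies in some biconnected component. *)

Lemma next_neq (T : eqType) (p : seq T) x :
  uniq p -> 1 < size p -> x \in p -> next p x != x.
Proof.
move=> up szp /rot_to[i [|y t] def]; first by move: szp; rewrite -(size_rot i) def.
have := rot_uniq i p; rewrite up def /= inE negb_or => /andP[/andP[xy _] _].
by rewrite -(next_rot i up) def /= eqxx eq_sym.
Qed.

Lemma clique_cycle (T : eqType) (r : rel T) (p : seq T) :
  uniq p -> 1 < size p -> {in p &, forall y z, y != z -> r y z} -> cycle r p.
Proof.
move=> up szp rp; apply: cycle_from_next => // x xp.
by apply: rp; rewrite ?mem_next // eq_sym next_neq.
Qed.

Lemma maximal_superset (T : finType) (P : {set T} -> Prop) (X : {set T}) :
  P X ->
  exists2 Y : {set T}, X \subset Y &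
    P Y /\ forall Z : {set T}, Y \subset Z -> P Z -> Z = Y.
Proof.
have [n] := ubnP #|~: X|; elim: n X => // n IH X ltXn PX.
case: (classic (exists2 Z : {set T}, X \proper Z & P Z)) => [[Z XZ PZ] | noZ].
  have ltZX : #|~: Z| < #|~: X| by apply: proper_card; rewrite properC.
  have [Y ZY maxY] := IH Z (leq_trans ltZX ltXn) PZ.
  by exists Y; first exact: subset_trans (proper_sub XZ) ZY.
exists X => //; split=> // Z XZ PZ; apply/eqP; apply: contraT => neqZX.
by case: noZ; exists Z; rewrite // properEneq eq_sym neqZX.
Qed.

Section Graphs.
Variable A : finType.
Implicit Types (H : {set {set A}}) (s : seq A).

Definition nonseparable H := connected H /\ forall a, ~ articulation H a.

Lemma adj_sym H : symmetric (adj H).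
Proof. by move=> x y; rewrite /adj setUC. Qed.

Lemma adj_verts H x y : adj H x y -> x \in verts H /\ y \in verts H.
Proof.
by move=> xy; split; apply/bigcupP; exists [set x; y]; rewrite // !inE eqxx ?orbT.
Qed.

Lemma vertsS H H' : H \subset H' -> verts H \subset verts H'.
Proof.
by move=> sHH'; apply/bigcupsP=> e eH; apply: bigcup_sup; apply: (subsetP sHH').
Qed.

Lemma sub_path_in H H' b c s : H \subset H' -> path_in H b c s -> path_in H' b c s.
Proof.
move=> sHH' /and3P[pbs ubs lbs]; apply/and3P; split=> //.
by apply: sub_path pbs => x y; apply: (subsetP sHH').
Qed.

Lemma path_in_within H x l b c :
  path (adj H) x l -> b \in x :: l -> c \in x :: l ->
  exists2 s, path_in H b c s & {subset b :: s <= x :: l}.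
Proof.
set L := x :: l => pxl bL cL.
pose e := [rel u v | [&& adj H u v, u \in L & v \in L]].
have esym : symmetric e by move=> u v /=; rewrite adj_sym [(u \in L) && _]andbC.
have pe : path e x l.
  apply: (sub_in_path (P := mem L)) pxl; last exact/allP.
  by move=> u v /= uL vL ->; rewrite uL vL.
have /connectP[p pbp ->] : connect e b c.
  apply: connect_trans (path_connect pe cL).
  by rewrite (sym_connect_sym esym) (path_connect pe bL).
case: (shortenP pbp) => s pbs ubs _; exists s.
  by apply/and3P; split=> //; apply: sub_path pbs => u v /andP[].
move=> v; rewrite inE => /predU1P[-> // |]; move: pbs {ubs}.
elim: s b {pbp bL} => //= y s IH u /andP[/and3P[_ _ yL] /IH sL].
by rewrite inE => /predU1P[->|].
Qed.

Lemma hamiltonian_nonseparable H s :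
  H != set0 -> uniq s -> cycle (adj H) s -> verts H \subset [set x in s] ->
  nonseparable H.
Proof.
move=> H0 us cs /subsetP sHs; split.
  split=> // b c /sHs; rewrite inE => /rot_to[i t def] /sHs; rewrite inE => cs'.
  have: cycle (adj H) (b :: t) by rewrite -def rot_cycle.
  rewrite /= rcons_path => /andP[pbt _].
  have cbt : c \in b :: t by rewrite -def mem_rot.
  have [p pbc _] := path_in_within pbt (mem_head _ _) cbt.
  by exists p.
move=> a [/sHs]; rewrite inE => /rot_to[i t def] [b [c [bB cB bc allb]]].
move: bB cB; rewrite !inE => /andP[ba /sHs bs] /andP[ca /sHs cs'].
have bt : b \in t by move: bs; rewrite inE -(mem_rot i) def inE (negbTE ba).
have ct : c \in t by move: cs'; rewrite inE -(mem_rot i) def inE (negbTE ca).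
have: uniq (a :: t) by rewrite -def rot_uniq.
have: cycle (adj H) (a :: t) by rewrite -def rot_cycle.
case: t {def} bt ct => [//|h t] bt ct; rewrite /= rcons_path => /and3P[_ pht _].
case/andP => a_notin _.
have [p pbc sp] := path_in_within pht bt ct.
by move/allb/sp: pbc; rewrite (negbTE a_notin).
Qed.

Lemma nonseparable_setU1 H x w :
  nonseparable H -> x \in verts H -> w \in verts H ->
  nonseparable ([set [set x; w]] :|: H).
Proof.
move=> [[H0 connH] noartH] xH wH.
have sH := subsetUr [set [set x; w]] H.
have vH : verts ([set [set x; w]] :|: H) = verts H.
  rewrite /verts bigcup_setU big_set1; apply/setUidPr.
  by apply/subsetP=> y; rewrite !inE => /orP[]/eqP->.
split.
  split; first by apply/set0Pn; exists [set x; w]; rewrite !inE eqxx.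
  rewrite vH => b c bH cH; have [s pbc] := connH b c bH cH.
  by exists s; apply: sub_path_in pbc.
move=> a [aH [b [c [bH cH bc allb]]]]; apply: (noartH a); rewrite vH in aH bH cH.
by split=> //; exists b, c; split=> // s /(sub_path_in sH); apply: allb.
Qed.

Lemma avoiding_path H z x w :
  nonseparable H -> [/\ x \in verts H, z \in verts H & w \in verts H] ->
  x != z -> w != z -> x != w ->
  exists2 s, path_in H x w s & z \notin x :: s.
Proof.
move=> [_ noartH] [xH zH wH] xz wz xw; apply: NNPP => noavoid.
apply: (noartH z); split=> //; exists x, w; rewrite !inE xz wz xH wH.
split=> // s pxw.
by apply: contraT => zs; case: noavoid; exists s.
Qed.

Lemma cycle_in_closing H z x w s :
  adj H z x -> adj H w z -> path_in H x w s -> z \notin x :: s -> x != w ->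
  cycle_in H (z :: x :: s).
Proof.
move=> zx wz /and3P[pxs uxs /eqP lxs] zxs xw; apply/and3P; split.
- by case: s lxs {pxs uxs zxs} => [/= xeqw|//]; rewrite xeqw eqxx in xw.
- by rewrite cons_uniq zxs uxs.
by rewrite /cycle -cat1s rcons_cat cat_path /= zx rcons_path pxs lxs wz.
Qed.

Definition cycle_graph s : {set {set A}} := [set [set x; next s x] | x in s].

Lemma cycle_graph_sub H s : cycle (adj H) s -> cycle_graph s \subset H.
Proof. by move=> cs; apply/subsetP=> _ /imsetP[x xs ->]; apply: next_cycle cs xs. Qed.

Lemma verts_cycle_graph s : verts (cycle_graph s) = [set x in s].
Proof.
apply/setP=> y; rewrite inE; apply/bigcupP/idP => [[_ /imsetP[x xs ->]] | ys].
  by rewrite !inE => /predU1P[-> | /eqP->]; rewrite ?mem_next.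
by exists [set y; next s y]; [apply: imset_f | rewrite !inE eqxx].
Qed.

Lemma cycle_graph_neq0 s : s != [::] -> cycle_graph s != set0.
Proof.
case: s => // x s _; apply/set0Pn; exists [set x; next (x :: s) x].
by apply: imset_f; rewrite mem_head.
Qed.

Lemma cycle_graph_nonseparable s :
  s != [::] -> uniq s -> nonseparable (cycle_graph s).
Proof.
move=> s0 us; apply: (hamiltonian_nonseparable (s := s)).
- exact: cycle_graph_neq0.
- exact: us.
- by apply: cycle_from_next => // x xs; apply: imset_f.
by rewrite verts_cycle_graph.
Qed.

End Graphs.

Section Evaluations.
Variables (A V : finType) (Av : V -> {set A}).
Local Notation G := (Gall Av).

Lemma Gall_edge e : e \in G -> #|e| = 2 /\ exists v, e \subset Av v.
Proof.
by case/bigcupP=> v _; rewrite inE /is_edge => /andP[/eqP e2 ev]; split; last exists v.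
Qed.

Lemma Gall_adj_neq x y : adj G x y -> x != y.
Proof. by case/Gall_edge=> + _; apply: contra_eqN => /eqP->; rewrite setUid cards1. Qed.

Lemma Gall_adj v x y : x != y -> x \in Av v -> y \in Av v -> adj G x y.
Proof.
move=> xy xv yv; apply/bigcupP; exists v => //.
by rewrite inE /is_edge cards2 xy subUset !sub1set xv yv.
Qed.

Section Component.
Hypothesis cond1 : condition1 Av.
Variable B : {set {set A}}.
Hypotheses (compB : bicomponent G B) (sepB : nonseparable B).

Lemma bicomponent_sub : B \subset G.
Proof. by case: compB. Qed.

Lemma bicomponent_adj_trans x z w : adj B x z -> adj B z w -> x != w -> adj B x w.
Proof.
move=> xz zw xw; have sBG := bicomponent_sub.
have BG u y : adj B u y -> adj G u y by apply: (subsetP sBG).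
have [zx wz] : adj B z x /\ adj B w z by split; rewrite adj_sym.
have [[xB zB] [_ wB]] := (adj_verts xz, adj_verts zw).
have [s pxw zxs] := avoiding_path sepB (And3 xB zB wB)
  (Gall_adj_neq (BG _ _ xz)) (Gall_adj_neq (BG _ _ wz)) xw.
have [v /subsetP sv] := cond1 (cycle_in_closing
  (BG _ _ zx) (BG _ _ wz) (sub_path_in sBG pxw) zxs xw).
have xwG : adj G x w.
  apply: (Gall_adj (v := v) xw); apply: sv; rewrite in_set in_cons.
    by rewrite mem_head orbT.
  by case/and3P: pxw => _ _ /eqP<-; rewrite mem_last orbT.
have [_ _ _ maxB] := compB.
have sB'G : [set [set x; w]] :|: B \subset G by rewrite subUset sub1set sBG andbT.
have <- := maxB _ (subsetUr _ B) sB'G (or_intror (nonseparable_setU1 sepB xB wB)).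
by rewrite /adj !inE eqxx.
Qed.

Lemma bicomponent_clique x y : x \in verts B -> y \in verts B -> x != y -> adj B x y.
Proof.
move=> xB yB; have [s /and3P[pxs uxs /eqP <-]] := sepB.1.2 x y xB yB.
case: s pxs uxs => [|z s] /=; first by rewrite eqxx.
move=> /andP[xz pzs] /andP[]; rewrite inE negb_or => /andP[_ xs] _ _.
elim: s z xz pzs xs => [//|w s IH] z xz /= /andP[zw pws].
rewrite inE negb_or => /andP[xw xs].
exact: IH (bicomponent_adj_trans xz zw xw) pws xs.
Qed.

Lemma nonseparable_bicomponent_covered : exists v, verts B \subset Av v.
Proof.
have [B0 _ _ _] := compB; have /set0Pn[e eB] := B0.
have [e2 [v ev]] := Gall_edge (subsetP bicomponent_sub e eB).
have eB' : e \subset verts B by apply: bigcup_sup eB.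
case: (ltnP 2 #|verts B|) => [big | small].
  have cyc : cycle_in G (enum (verts B)).
    apply/and3P; split; rewrite ?enum_uniq -?cardE //.
    apply: clique_cycle; rewrite ?enum_uniq -?cardE 1?ltnW // => x y.
    rewrite !mem_enum => xB yB xy.
    exact: (subsetP bicomponent_sub) (bicomponent_clique xB yB xy).
  by have [u] := cond1 cyc; rewrite set_enum; exists u.
exists v; suff -> : verts B = e by [].
by apply/eqP; rewrite eq_sym eqEcard eB' e2 small.
Qed.

End Component.

Lemma bicomponent_covered B :
  condition1 Av -> bicomponent G B -> exists v, verts B \subset Av v.
Proof.
move=> cond1 compB; have [_ sBG [/eqP/cards1P[e Be] | sepB] _] := compB.
  rewrite Be in sBG *; have [_ [v ev]] := Gall_edge (subsetP sBG e (set11 e)).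
  by exists v; rewrite /verts big_set1.
exact: nonseparable_bicomponent_covered.
Qed.

Lemma cycle_in_bicomponent s :
  cycle_in G s -> exists2 B, bicomponent G B & [set x in s] \subset verts B.
Proof.
case/and3P=> szs us cs.
have s0 : s != [::] by case: s szs {us cs}.
have [B sCB [[sBG bB] maxB]] :=
  maximal_superset (P := fun B => B \subset G /\ biconnected B)
  (conj (cycle_graph_sub cs) (or_intror (cycle_graph_nonseparable s0 us))).
exists B; last by rewrite -verts_cycle_graph vertsS.
split=> //; first by apply: contraNneq (cycle_graph_neq0 s0) => B0; rewrite -subset0 -B0.
by move=> B' sBB' sB'G bB'; apply: maxB.
Qed.

End Evaluations.

Theorem proposition1 (A V : finType) (Av : V -> {set A})
  (hA : 3 <= #|A|) (hV : 3 <= #|V|) (hAv : forall v, 2 <= #|Av v|) :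
  condition1 Av <->
  (forall B : {set {set A}}, bicomponent (Gall Av) B ->
     exists v : V, verts B \subset Av v).
Proof.
split=> [cond1 B | covered s cyc]; first exact: bicomponent_covered.
have [B /covered[v vB] sB] := cycle_in_bicomponent cyc.
by exists v; apply: subset_trans vB.
Qed.
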